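(* For every integer $n\geq 2$, $\operatorname{adim}(P_2\square P_n)\leq \left\lceil \frac{3n-1}{4}\right\rceil$.
   Context: $P_n$ is the path on $n$ vertices and $\square$ is the Cartesian product of graphs. For a graph $G$, $d(u,v)$ is the shortest-path distance and $d_1(u,v)=\min(d(u,v),2)$. A set $A\subseteq V(G)$ is an adjacency resolving set if for all distinct $x,y\in V(G)$ there is $z\in A$ with $d_1(z,x)\neq d_1(z,y)$; $\operatorname{adim}(G)$ is the minimum cardinality of an adjacency resolving set. *)

From mathcomp Require Import all_boot.
Set Implicit Arguments. Unset Strict Implicit. Unset Printing Implicit Defensive.

(* Truncated distance d_1(u,v) = min(d(u,v), 2): it is 0 iff u = v, 1 iff u,v adjacent,
   and 2 otherwise (including the case of distinct non-adjacent / disconnected vertices). *)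
Definition d1 (T : finType) (adj : rel T) (u v : T) : nat :=
  if u == v then 0 else if adj u v then 1 else 2.

Definition adj_resolving (T : finType) (adj : rel T) (A : {set T}) : bool :=
  [forall x : T, forall y : T, (x != y) ==> [exists z in A, d1 adj z x != d1 adj z y]].

(* adjacency dimension: minimum cardinality of an adjacency resolving set
   (V(G) itself is always resolving, so #|T| is a valid default). *)
Definition adim (T : finType) (adj : rel T) : nat :=
  \big[minn/#|T|]_(A : {set T} | adj_resolving adj A) #|A|.

Definition path_adj (n : nat) : rel 'I_n :=
  fun i j => (i.+1 == j :> nat) || (j.+1 == i :> nat).

Definition cart_adj (T1 T2 : finType) (a1 : rel T1) (a2 : rel T2) : rel (T1 * T2) :=
  fun x y => ((x.1 == y.1) && a2 x.2 y.2) || ((x.2 == y.2) && a1 x.1 y.1).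

Definition P2xPn_adj (n : nat) : rel ('I_2 * 'I_n) := cart_adj (@path_adj 2) (@path_adj n).

From mathcomp Require Import all_boot zify.

Set Implicit Arguments.
Unset Strict Implicit.
Unset Printing Implicit Defensive.

(** The resolving set repeats, with period 8 in the column index, the pattern
    top / - / both / - / bottom / - / both / -, i.e. three vertices every four
    columns, and ends with a three-column tail chosen according to [n mod 8].
    Every vertex outside the set has a nonempty neighbourhood in it, and these
    neighbourhoods are pairwise distinct.  Neighbourhoods of vertices three or
    more columns apart are disjoint, so this is a local property, and by
    8-periodicity it reduces to finitely many configurations, which are
    checked by computation. *)

Section AdjacencyResolving.

Variables (T : finType) (adj : rel T).

Lemma adim_le_card (A : {set T}) : adj_resolving adj A -> adim adj <= #|A|.
Proof.
rewrite /adim => resA; have : A \in index_enum {set T} by rewrite mem_index_enum.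
elim: (index_enum _) => [|B s IHs] //; rewrite inE big_cons.
case/predU1P => [<-|As]; first by rewrite resA geq_minl.
by case: ifP => _; rewrite ?geq_min IHs ?orbT.
Qed.

Lemma adj_resolving_of_separating (A : {set T}) :
  (forall x y, x != y -> x \notin A -> y \notin A ->
     exists2 z, z \in A & adj z x != adj z y) ->
  adj_resolving adj A.
Proof.
move=> sepA; apply/forallP => x; apply/forallP => y; apply/implyP => xy.
have d1_self u v : u != v -> d1 adj u u != d1 adj u v.
  by rewrite /d1 eqxx => /negbTE ->; case: adj.
have [Ax | nAx] := boolP (x \in A); first by apply/existsP; exists x; rewrite Ax d1_self.
have [Ay | nAy] := boolP (y \in A).
  by apply/existsP; exists y; rewrite Ay eq_sym d1_self // eq_sym.
have [z Az sep] := sepA x y xy nAx nAy; apply/existsP; exists z; rewrite Az /d1.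
have zx : z != x by apply: contraNneq nAx => <-.
have zy : z != y by apply: contraNneq nAy => <-.
by rewrite (negbTE zx) (negbTE zy); move: sep; do 2 case: adj.
Qed.

End AdjacencyResolving.

Definition grid_adj (u v : nat * nat) : bool :=
  ((u.1 == v.1) && ((u.2.+1 == v.2) || (v.2.+1 == u.2)))
  || ((u.2 == v.2) && ((u.1.+1 == v.1) || (v.1.+1 == u.1))).

Definition in_grid (n : nat) (v : nat * nat) : bool := (v.1 < 2) && (v.2 < n).

Definition grid (n : nat) : seq (nat * nat) := [seq (r, c) | r <- iota 0 2, c <- iota 0 n].

Definition to_nat2 {n} (v : 'I_2 * 'I_n) : nat * nat := (val v.1, val v.2).

Lemma P2xPn_adjE n (u v : 'I_2 * 'I_n) :
  P2xPn_adj u v = grid_adj (to_nat2 u) (to_nat2 v).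
Proof. by []. Qed.

Lemma to_nat2_inj n : injective (@to_nat2 n).
Proof. by move=> [a b] [c d] [/val_inj -> /val_inj ->]. Qed.

Lemma in_grid_to_nat2 n (v : 'I_2 * 'I_n) : in_grid n (to_nat2 v).
Proof. by rewrite /in_grid !ltn_ord. Qed.

Lemma to_nat2_onto n z : in_grid n z -> exists v : 'I_2 * 'I_n, to_nat2 v = z.
Proof. by case: z => r c /andP[r2 cn]; exists (Ordinal r2, Ordinal cn). Qed.

Lemma all_gridP n (p : pred (nat * nat)) :
  all p (grid n) -> forall v, in_grid n v -> p v.
Proof.
by move=> /all_allpairsP pP [r c] /andP[r2 cn]; apply: pP; rewrite mem_iota.
Qed.

Lemma all_grid2P n (p : rel (nat * nat)) :
  all (fun x => all (p x) (grid n)) (grid n) ->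
  forall x y, in_grid n x -> in_grid n y -> p x y.
Proof. by move=> pP x y /(all_gridP pP)/all_gridP; apply. Qed.

Lemma grid_adj_col u v : grid_adj u v -> (u.2 <= v.2.+1) && (v.2 <= u.2.+1).
Proof.
by rewrite /grid_adj => /orP[] /andP[/eqP e /orP[] /eqP e']; apply/andP; lia.
Qed.

Definition neighbours (v : nat * nat) : seq (nat * nat) :=
  [seq z <- [:: (1 - v.1, v.2); (v.1, v.2.-1); (v.1, v.2.+1)] | grid_adj z v].

Definition shift8 (v : nat * nat) : nat * nat := (v.1, 8 + v.2).

Lemma shift8_inj : injective shift8.
Proof. by move=> [a b] [c d] [-> /addnI ->]. Qed.

Lemma grid_adj_shift u v : grid_adj (shift8 u) (shift8 v) = grid_adj u v.
Proof. by rewrite /grid_adj /= -!addnS !eqn_add2l. Qed.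

Lemma in_grid_shift n v : in_grid (8 + n) (shift8 v) = in_grid n v.
Proof. by rewrite /in_grid /= ltn_add2l. Qed.

Lemma neighbours_shift v : 0 < v.2 -> neighbours (shift8 v) = map shift8 (neighbours v).
Proof.
case: v => r [|c] // _.
rewrite /neighbours (_ : [:: _; _; _] = map shift8 [:: (1 - r, c.+1); (r, c); (r, c.+2)]) //.
by rewrite filter_map; congr map; apply: eq_filter => z; rewrite /preim /= grid_adj_shift.
Qed.

Definition periodic_part (v : nat * nat) : bool :=
  match v.2 %% 8 with
  | 0 => v.1 == 0
  | 2 | 6 => true
  | 4 => v.1 == 1
  | _ => false
  end.

(* Cells [(row, k)] of the tail, [k] counting from column [n - 3]. *)
Definition tail_cells (s : nat) : seq (nat * nat) :=
  match s with
  | 0 => [:: (0, 0); (1, 1)]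
  | 1 => [:: (0, 0); (0, 1); (1, 0)]
  | 2 => [:: (0, 1); (0, 2)]
  | 5 => [:: (0, 0); (0, 1); (0, 2)]
  | 7 => [:: (1, 0); (1, 2)]
  | _ => [:: (0, 0); (0, 2)]
  end.

Definition resolving_pattern (n : nat) (v : nat * nat) : bool :=
  if v.2 + 3 < n then periodic_part v else (v.1, v.2 + 3 - n) \in tail_cells (n %% 8).

Lemma resolving_pattern_shift n v : resolving_pattern (8 + n) (shift8 v) = resolving_pattern n v.
Proof.
rewrite /resolving_pattern /periodic_part /= -addnA ltn_add2l subnDl.
by rewrite modnDl modnDl.
Qed.

Definition separates n (x y z : nat * nat) : bool :=
  [&& in_grid n z, resolving_pattern n z & grid_adj z x != grid_adj z y].

Definition separated n (x y : nat * nat) : bool :=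
  has (separates n x y) (neighbours x ++ neighbours y).

Definition resolved n (x y : nat * nat) : bool :=
  [|| x == y, resolving_pattern n x, resolving_pattern n y | separated n x y].

Definition dominated n (x : nat * nat) : bool :=
  has (fun z => in_grid n z && resolving_pattern n z) (neighbours x).

Lemma resolvedC n x y : resolved n x y = resolved n y x.
Proof.
have sepC : separated n x y = separated n y x.
  rewrite /separated !has_cat orbC.
  by congr (_ || _); apply: eq_has => z; rewrite /separates eq_sym.
rewrite /resolved eq_sym sepC; congr (_ || _); exact: orbCA.
Qed.

Lemma resolved_shift n x y : 0 < x.2 -> 0 < y.2 ->
  resolved (8 + n) (shift8 x) (shift8 y) = resolved n x y.
Proof.
move=> x0 y0; rewrite /resolved /separated (inj_eq shift8_inj) !resolving_pattern_shift.
have sep_shift : preim shift8 (separates (8 + n) (shift8 x) (shift8 y)) =1 separates n x y.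
  by move=> z; rewrite /preim /separates /= in_grid_shift resolving_pattern_shift !grid_adj_shift.
by rewrite !neighbours_shift // -map_cat has_map (eq_has sep_shift).
Qed.

Lemma resolved_far n x y : resolving_pattern n x || dominated n x ->
  (x.2 + 3 <= y.2) || (y.2 + 3 <= x.2) -> resolved n x y.
Proof.
case/orP => [Ax | /hasP[z xz /andP[zn Az]]] far; first by rewrite /resolved Ax orbT.
suff sep : separated n x y by rewrite /resolved sep !orbT.
apply/hasP; exists z; first by rewrite mem_cat xz.
move: xz; rewrite mem_filter => /andP[zx _].
rewrite /separates zn Az zx /=; apply/negP => /grid_adj_col zy.
by move: (grid_adj_col zx) zy far; lia.
Qed.

Lemma resolved_small n x y : 2 <= n < 16 -> in_grid n x -> in_grid n y -> resolved n x y.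
Proof.
have : all (fun n => all (fun x => all (resolved n x) (grid n)) (grid n)) (iota 2 14).
  by vm_compute.
by move=> /allP small n_range; apply/all_grid2P/small; rewrite mem_iota.
Qed.

(* [16 + m] reduces to [m.+16], so these computations only meet the periodic part. *)
Lemma resolved_first_columns m x y : in_grid 12 x -> in_grid 12 y -> resolved (16 + m) x y.
Proof. by move: x y; apply: all_grid2P; vm_compute. Qed.

Lemma dominated_first_columns m x : in_grid 12 x ->
  resolving_pattern (16 + m) x || dominated (16 + m) x.
Proof. by move: x; apply: all_gridP; vm_compute. Qed.

Lemma resolved_in_grid n x y : 2 <= n -> in_grid n x -> in_grid n y -> resolved n x y.
Proof.
elim/ltn_ind: n x y => n IH [r i] [r' j] n2 /andP[/= r2 i_lt] /andP[/= r'2 j_lt].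
have [n16 | n16] := ltnP n 16; first by apply: resolved_small; apply/andP.
have [m n_eq] : exists m, n = 16 + m by exists (n - 16); lia.
subst n.
have [/andP[i12 j12] | not_small] := boolP ((i < 12) && (j < 12)).
  by apply: resolved_first_columns; apply/andP.
have [/andP[i9 j9] | not_large] := boolP ((9 <= i) && (9 <= j)).
  have -> : (r, i) = shift8 (r, i - 8) by rewrite /shift8 subnKC // ltnW.
  have -> : (r', j) = shift8 (r', j - 8) by rewrite /shift8 subnKC // ltnW.
  rewrite (_ : 16 + m = 8 + (8 + m)) // resolved_shift /=; try lia.
  by apply: IH; rewrite /in_grid /= ?r2 ?r'2; lia.
have [i9 | i9] := ltnP i 9.
  by apply: resolved_far => /=; [apply: dominated_first_columns; apply/andP => /= |]; lia.
rewrite resolvedC.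
by apply: resolved_far => /=; [apply: dominated_first_columns; apply/andP => /= |]; lia.
Qed.

Definition pattern_set n : {set 'I_2 * 'I_n} :=
  [set v | resolving_pattern n (to_nat2 v)].

Lemma pattern_set_resolving n : 2 <= n -> adj_resolving (@P2xPn_adj n) (pattern_set n).
Proof.
move=> n2; apply: adj_resolving_of_separating => x y xy; rewrite !inE => nAx nAy.
have := resolved_in_grid n2 (in_grid_to_nat2 x) (in_grid_to_nat2 y).
rewrite /resolved (inj_eq (@to_nat2_inj n)) (negbTE xy) (negbTE nAx) (negbTE nAy) /=.
case/hasP => z _ /and3P[zn Az sep]; have [v zE] := to_nat2_onto zn.
by exists v; rewrite ?inE ?P2xPn_adjE zE.
Qed.

Definition column_weight n c : nat :=
  resolving_pattern n (0, c) + resolving_pattern n (1, c).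

Lemma card_pattern_set n : #|pattern_set n| = sumn [seq column_weight n c | c <- iota 0 n].
Proof.
transitivity (\sum_(v : 'I_2 * 'I_n) (resolving_pattern n (to_nat2 v) : nat)).
  rewrite -sum1_card big_mkcond; apply: eq_bigr => v _; rewrite inE.
  by case: resolving_pattern.
rewrite -(pair_bigA _ (fun (r : 'I_2) (c : 'I_n) => (resolving_pattern n (r : nat, c : nat) : nat))).
rewrite exchange_big sumnE big_map -[n in iota 0 n](subn0 n) -/(index_iota 0 n) big_mkord.
by apply: eq_bigr => c _; rewrite !big_ord_recl big_ord0 /= addn0.
Qed.

Lemma column_weight_shift n c : column_weight (8 + n) (8 + c) = column_weight n c.
Proof. by rewrite /column_weight -!/(shift8 (_, c)) !resolving_pattern_shift. Qed.

Lemma weight_first_period n : 3 <= n ->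
  sumn [seq column_weight (8 + n) c | c <- iota 0 8] = 6.
Proof. by move=> /subnKC <-; vm_compute. Qed.

Lemma sum_column_weight_le n : 2 <= n ->
  sumn [seq column_weight n c | c <- iota 0 n] <= (3 * n + 2) %/ 4.
Proof.
elim/ltn_ind: n => n IH n2.
have [n11 | n11] := ltnP n 11.
  have : all (fun n => sumn [seq column_weight n c | c <- iota 0 n] <= (3 * n + 2) %/ 4)
    (iota 2 9) by vm_compute.
  by move/allP; apply; rewrite mem_iota n2.
have [m n_eq] : exists m, n = 8 + m by exists (n - 8); lia.
subst n; rewrite iotaD map_cat sumn_cat weight_first_period; last by lia.
rewrite (iotaDl 8 0) -map_comp (eq_map (column_weight_shift m)).
have -> : 3 * (8 + m) + 2 = 6 * 4 + (3 * m + 2) by lia.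
by rewrite divnMDl // leq_add2l IH //; lia.
Qed.

(* ceil((3n-1)/4) = (3n+2) %/ 4 for n >= 1 *)
Theorem lemma4p8 (n : nat) : 2 <= n ->
  adim (@P2xPn_adj n) <= (3 * n + 2) %/ 4.
Proof.
move=> n2; apply: leq_trans (adim_le_card (pattern_set_resolving n2)) _.
by rewrite card_pattern_set sum_column_weight_le.
Qed.
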